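(* If $\Lambda$ is a Legendrian knot with $\operatorname{tb}(\Lambda)<0$, then $$m(\Lambda)\ge\left\lceil\sqrt{-\operatorname{tb}(\Lambda)-\tfrac34}+\tfrac32\right\rceil.$$
   Context: Legendrian knots are taken in the standard contact structure on $\mathbb{R}^3$ and represented by front ($xz$-) projections, which have cusps in place of vertical tangencies and in which the strand of more negative slope is the overstrand at every crossing. For an oriented front with $P$ positive crossings, $N$ negative crossings and $C$ cusps, the Thurston–Bennequin number is $\operatorname{tb}=P-N-\frac12C$, a Legendrian isotopy invariant. Legendrian mosaic tiles: a square tile whose four edge midpoints are potential connection points; the tiles are $T_0$ (empty); $T_1,\dots,T_4$ (a single arc joining midpoints of two adjacent edges, one per pair of adjacent edges); $T_5,T_6$ (a segment joining midpoints of opposite edges); $T_7,T_8$ (two disjoint arcs each joining adjacent edges, using all four midpoints); $T_{10}$ (two crossing segments joining opposite edges). A Legendrian $n$-mosaic is an $n\times n$ array of these tiles with the array rotated $45^\circ$ counterclockwise so the strands form a front diagram (after rotation $T_2$, $T_4$ contain one cusp and $T_8$ two cusps; $T_1,T_3,T_7$ contain none; in $T_{10}$ the negative-slope strand is over). It is suitably connected if connection points agree across shared edges and none lies on the outer boundary. The mosaic number $m(\Lambda)$ of a Legendrian knot $\Lambda$ is the smallest $n$ such that some suitably connected Legendrian $n$-mosaic depicts a front of a Legendrian knot Legendrian isotopic to $\Lambda$. *)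

From HB Require Import structures.
From mathcomp Require Import all_boot all_order all_algebra.
From mathcomp Require Import reals.

Set Implicit Arguments.
Unset Strict Implicit.
Unset Printing Implicit Defensive.
Import Order.TTheory GRing.Theory Num.Theory.

(* Legendrian mosaic tiles (T9, the other crossing, is not a Legendrian tile). *)
Inductive tile := T0 | T1 | T2 | T3 | T4 | T5 | T6 | T7 | T8 | T10.

(* Sides of an (unrotated) tile: North, East, South, West.  The connection
   points are the midpoints of these sides. *)
Inductive side := sN | sE | sS | sW.

Definition side_code (s : side) : 'I_4 :=
  match s with sN => inord 0 | sE => inord 1 | sS => inord 2 | sW => inord 3 end.
Definition side_decode (i : 'I_4) : side :=
  match val i with 0 => sN | 1 => sE | 2 => sS | _ => sW end.
Lemma side_codeK : cancel side_code side_decode.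
Proof. by case; rewrite /side_decode /= inordK. Qed.
HB.instance Definition _ := Finite.copy side (can_type side_codeK).

Definition opp_side (s : side) : side :=
  match s with sN => sS | sS => sN | sE => sW | sW => sE end.

(* The arcs of each tile, as an involution on connection points:
   [partner t s = Some s'] iff tile t has an arc joining the midpoints of
   sides s and s'.  After the 45 degree counterclockwise
   rotation, the NW and SE corners become the left/right vertices, so arcs
   around them are cusps (T2, T4 one cusp, T8 two), while T1, T3, T7 have
   none; the N-S segment gets slope -1 and the W-E segment slope +1, so in
   T10 the N-S strand is the overstrand. *)
Definition partner (t : tile) (s : side) : option side :=
  match t, s with
  | T1, sN => Some sE | T1, sE => Some sN
  | T2, sN => Some sW | T2, sW => Some sN
  | T3, sS => Some sW | T3, sW => Some sS
  | T4, sS => Some sE | T4, sE => Some sS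
  | T5, sW => Some sE | T5, sE => Some sW
  | T6, sN => Some sS | T6, sS => Some sN
  | T7, sN => Some sE | T7, sE => Some sN
  | T7, sS => Some sW | T7, sW => Some sS
  | T8, sN => Some sW | T8, sW => Some sN
  | T8, sS => Some sE | T8, sE => Some sS
  | T10, sW => Some sE | T10, sE => Some sW
  | T10, sN => Some sS | T10, sS => Some sN
  | _, _ => None
  end.

Definition uses (t : tile) (s : side) : bool := partner t s != None.

Definition tile_cusps (t : tile) : nat :=
  match t with T2 => 1 | T4 => 1 | T8 => 2 | _ => 0 end.

Definition is_crossing (t : tile) : bool := if t is T10 then true else false.

(* A Legendrian n-mosaic: M i j is the tile in row i (counted from the top)
   and column j (counted from the left), before the 45 degree rotation. *)
Definition mosaic (n : nat) := 'I_n -> 'I_n -> tile.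

Definition cell n := ('I_n * 'I_n)%type.

Definition neighbor n (c : cell n) (d : side) : option (cell n) :=
  let: (i, j) := c in
  match d with
  | sN => if val i is i'.+1 then omap (fun i2 : 'I_n => (i2, j)) (insub i') else None
  | sS => omap (fun i2 : 'I_n => (i2, j)) (insub (val i).+1)
  | sW => if val j is j'.+1 then omap (fun j2 : 'I_n => (i, j2)) (insub j') else None
  | sE => omap (fun j2 : 'I_n => (i, j2)) (insub (val j).+1)
  end.

Definition tile_at n (M : mosaic n) (c : cell n) : tile := M c.1 c.2.

Definition suitably_connected n (M : mosaic n) : Prop :=
  (forall (c c' : cell n) (d : side), neighbor c d = Some c' ->
      uses (tile_at M c) d = uses (tile_at M c') (opp_side d)) /\
  (forall (c : cell n) (d : side), neighbor c d = None ->
      ~~ uses (tile_at M c) d).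

(* Oriented traversal.  A state (c, s) means: the strand enters cell c
   through the midpoint of side s.  The state is valid if tile c has a
   connection point on side s. *)
Definition state n := (cell n * side)%type.

Definition valid_state n (M : mosaic n) (x : state n) : bool :=
  uses (tile_at M x.1) x.2.

Definition next_state n (M : mosaic n) (x : state n) : state n :=
  match partner (tile_at M x.1) x.2 with
  | Some t => match neighbor x.1 t with
              | Some c' => (c', opp_side t)
              | None => x
              end
  | None => x
  end.

(* the same arc traversed in the opposite direction *)
Definition rev_state n (M : mosaic n) (x : state n) : state n :=
  match partner (tile_at M x.1) x.2 with
  | Some t => (x.1, t)
  | None => x
  end.

(* M depicts a front with exactly one component (a knot), and x0 is a
   state fixing an orientation of it: every oriented strand piece lies on
   the traversal through x0 or on the reversed traversal. *)
Definition knot_mosaic n (M : mosaic n) (x0 : state n) : Prop :=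
  valid_state M x0 /\
  forall y : state n, valid_state M y ->
    fconnect (next_state M) x0 y || fconnect (next_state M) (rev_state M x0) y.

(* Over strand: N-S segment; under strand: W-E segment.  The crossing is
   positive iff (over strand enters from S and under strand enters from E)
   or (over enters from N and under enters from W). *)
Definition crossing_sign n (M : mosaic n) (x0 : state n) (c : cell n) : int :=
  if fconnect (next_state M) x0 (c, sS) == fconnect (next_state M) x0 (c, sE)
  then 1%R else (-1)%R.

Definition writhe n (M : mosaic n) (x0 : state n) : int :=
  (\sum_(i < n) \sum_(j < n)
     (if is_crossing (M i j) then crossing_sign M x0 (i, j) else 0))%R.

Definition cusps n (M : mosaic n) : nat :=
  \sum_(i < n) \sum_(j < n) tile_cusps (M i j).

Definition tb (R : numFieldType) n (M : mosaic n) (x0 : state n) : R :=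
  ((writhe M x0)%:~R - (cusps M)%:R / 2)%R.

From HB Require Import structures.
From mathcomp Require Import all_boot all_order all_algebra.
From mathcomp Require Import reals zify lra.
Import Order.TTheory GRing.Theory Num.Theory.

Set Implicit Arguments.
Unset Strict Implicit.
Unset Printing Implicit Defensive.

(* Since [-tb <= P + N + C/2], it suffices to bound [2(P + N) + C] by
   [2(n-1)^2 - 2(n-1) + 2]; then [-tb - 3/4 <= (n - 3/2)^2].  Each tile
   carries [w + p] arcs, where [w = 2 * crossings + cusps] and [p] counts
   the remaining plain arcs, so [2 (w + p)] is its number of used sides.
   In a suitably connected mosaic the used E and W sides are equinumerous,
   as are the used N and S sides, so [sum (w + p)] equals the number of used
   sides obtained by charging one horizontal and one vertical side to every
   tile.  A case analysis on tiles shows that this charge exceeds [p] by at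
   most 2 in the interior and by less along the boundary, where some sides
   are forbidden. *)

Definition crossings n (M : mosaic n) : nat :=
  \sum_(i < n) \sum_(j < n) is_crossing (M i j).

Definition tile_weight (t : tile) : nat := 2 * is_crossing t + tile_cusps t.

Definition plain_arcs (t : tile) : nat :=
  match t with T1 | T3 | T5 | T6 => 1 | T7 => 2 | _ => 0 end.

Lemma tile_arcs t :
  2 * (tile_weight t + plain_arcs t) = uses t sN + uses t sE + uses t sS + uses t sW.
Proof. by case: t. Qed.

(* The number of charged sides a tile may exceed [plain_arcs] by, given
   which of the outer edges (top, bottom, left, right) it lies on.  The
   charged horizontal side is W, except in the bottom row where it is E; the
   charged vertical side is N, except in the right column where it is S. *)
Definition side_budget (top bot left right : bool) : nat :=
  if top then (if right then 1 else 0)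
  else if bot then (if left then 1 else if right then 0 else 1)
  else (if left then 0 else if right then 1 else 2).

Lemma charged_sides_le t top bot left right :
  ~~ (top && bot) -> ~~ (left && right) ->
  top ==> ~~ uses t sN -> bot ==> ~~ uses t sS ->
  left ==> ~~ uses t sW -> right ==> ~~ uses t sE ->
  (if bot then uses t sE else uses t sW) + (if right then uses t sS else uses t sN)
    <= plain_arcs t + side_budget top bot left right.
Proof. by case: t; case: top; case: bot; case: left; case: right. Qed.

Lemma big_nat_ends_const k (F : nat -> nat) c : (forall j, j < k -> F j.+1 = c) ->
  \sum_(0 <= j < k.+2) F j = F 0 + k * c + F k.+1.
Proof.
move=> Fc; rewrite big_nat_recl // big_nat_recr //= addnA.
by rewrite (@eq_big_nat _ _ _ 0 k _ (fun _ => c)) ?sum_nat_const_nat ?subn0.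
Qed.

Lemma sum_side_budget k :
  \sum_(0 <= i < k.+2) \sum_(0 <= j < k.+2)
     side_budget (i == 0) (i == k.+1) (j == 0) (j == k.+1) + 2 * k.+1
  = 2 * k.+1 ^ 2 + 2.
Proof.
have inner_eq j : j < k -> (j.+1 == 0) = false /\ (j.+1 == k.+1) = false.
  by move=> ltjk; split; rewrite // eqSS ltn_eqF.
have row_sum a b : \sum_(0 <= j < k.+2) side_budget a b (j == 0) (j == k.+1)
    = side_budget a b true false + k * side_budget a b false false
      + side_budget a b false true.
  rewrite (@big_nat_ends_const k _ (side_budget a b false false)) ?eqxx //.
  by move=> j /inner_eq[-> ->].
rewrite (@big_nat_ends_const k _ (\sum_(0 <= j < k.+2)
  side_budget false false (j == 0) (j == k.+1))); last by move=> i /inner_eq[-> ->].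
by rewrite !row_sum /= eqxx /=; nia.
Qed.

Lemma sum_nat2D k (F G : nat -> nat -> nat) :
  \sum_(0 <= i < k) \sum_(0 <= j < k) (F i j + G i j) =
  \sum_(0 <= i < k) \sum_(0 <= j < k) F i j + \sum_(0 <= i < k) \sum_(0 <= j < k) G i j.
Proof. by rewrite -big_split; apply: eq_bigr => i _; rewrite big_split. Qed.

Lemma insub_inord n k : k < n.+1 -> insub k = Some (inord k : 'I_n.+1).
Proof. by move=> ltkn; rewrite insubT; congr Some; apply: val_inj; rewrite /= inordK. Qed.

Section SuitablyConnected.

Variable m : nat.
Local Notation n := m.+1.
Variable M : mosaic n.

Definition tile_ij (i j : nat) : tile := M (inord i) (inord j).

Lemma neighbor_E i j : i < n -> j.+1 < n ->
  neighbor ((inord i, inord j) : cell n) sE = Some (inord i, inord j.+1).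
Proof. by move=> ltin ltjn /=; rewrite inordK ?(ltnW ltjn) // insub_inord. Qed.

Lemma neighbor_S i j : i.+1 < n -> j < n ->
  neighbor ((inord i, inord j) : cell n) sS = Some (inord i.+1, inord j).
Proof. by move=> ltin ltjn /=; rewrite inordK ?(ltnW ltin) // insub_inord. Qed.

Lemma neighbor_E_last i : neighbor ((inord i, inord m) : cell n) sE = None.
Proof. by rewrite /= inordK // insubN // ltnn. Qed.

Lemma neighbor_S_last j : neighbor ((inord m, inord j) : cell n) sS = None.
Proof. by rewrite /= inordK // insubN // ltnn. Qed.

Lemma neighbor_W_first i : neighbor ((inord i, inord 0) : cell n) sW = None.
Proof. by rewrite /= inordK. Qed.

Lemma neighbor_N_first j : neighbor ((inord 0, inord j) : cell n) sN = None.
Proof. by rewrite /= inordK. Qed.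

Hypothesis Msc : suitably_connected M.

Lemma uses_E_W i j : i < n -> j.+1 < n ->
  uses (tile_ij i j) sE = uses (tile_ij i j.+1) sW.
Proof. by move=> ltin ltjn; rewrite (Msc.1 _ _ _ (neighbor_E ltin ltjn)). Qed.

Lemma uses_S_N i j : i.+1 < n -> j < n ->
  uses (tile_ij i j) sS = uses (tile_ij i.+1 j) sN.
Proof. by move=> ltin ltjn; rewrite (Msc.1 _ _ _ (neighbor_S ltin ltjn)). Qed.

Lemma unused_E_last i : ~~ uses (tile_ij i m) sE.
Proof. exact: Msc.2 _ _ (neighbor_E_last i). Qed.

Lemma unused_S_last j : ~~ uses (tile_ij m j) sS.
Proof. exact: Msc.2 _ _ (neighbor_S_last j). Qed.

Lemma unused_W_first i : ~~ uses (tile_ij i 0) sW.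
Proof. exact: Msc.2 _ _ (neighbor_W_first i). Qed.

Lemma unused_N_first j : ~~ uses (tile_ij 0 j) sN.
Proof. exact: Msc.2 _ _ (neighbor_N_first j). Qed.

Lemma sum_uses_E_W i : i < n ->
  \sum_(0 <= j < n) uses (tile_ij i j) sE = \sum_(0 <= j < n) uses (tile_ij i j) sW.
Proof.
move=> ltin; rewrite big_nat_recr //= big_nat_recl //=.
rewrite (negbTE (unused_E_last i)) (negbTE (unused_W_first i)) addn0.
by apply: eq_big_nat => j /andP[_ ltjm]; rewrite uses_E_W.
Qed.

Lemma sum_uses_S_N j : j < n ->
  \sum_(0 <= i < n) uses (tile_ij i j) sS = \sum_(0 <= i < n) uses (tile_ij i j) sN.
Proof.
move=> ltjn; rewrite big_nat_recr //= big_nat_recl //=.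
rewrite (negbTE (unused_S_last j)) (negbTE (unused_N_first j)) addn0.
by apply: eq_big_nat => i /andP[_ ltim]; rewrite uses_S_N.
Qed.

Definition charged_sides (i j : nat) : nat :=
  (if i == m then uses (tile_ij i j) sE else uses (tile_ij i j) sW) +
  (if j == m then uses (tile_ij i j) sS else uses (tile_ij i j) sN).

Lemma sum_charged_sides :
  \sum_(0 <= i < n) \sum_(0 <= j < n) (tile_weight (tile_ij i j) + plain_arcs (tile_ij i j))
  = \sum_(0 <= i < n) \sum_(0 <= j < n) charged_sides i j.
Proof.
pose used d := \sum_(0 <= i < n) \sum_(0 <= j < n) nat_of_bool (uses (tile_ij i j) d).
have used_E_W : used sE = used sW.
  by apply: eq_big_nat => i /andP[_ ltin]; rewrite sum_uses_E_W.
have used_S_N : used sS = used sN.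
  rewrite /used exchange_big_nat [RHS]exchange_big_nat.
  by apply: eq_big_nat => j /andP[_ ltjn]; rewrite sum_uses_S_N.
have charged_horizontal : \sum_(0 <= i < n) \sum_(0 <= j < n)
    (if i == m then uses (tile_ij i j) sE else uses (tile_ij i j) sW) = used sW.
  apply: eq_big_nat => i /andP[_ ltin].
  by case: eqP => [->|_]; rewrite ?sum_uses_E_W.
have charged_vertical : \sum_(0 <= i < n) \sum_(0 <= j < n)
    (if j == m then uses (tile_ij i j) sS else uses (tile_ij i j) sN) = used sN.
  rewrite /used exchange_big_nat [RHS]exchange_big_nat.
  apply: eq_big_nat => j /andP[_ ltjn].
  by case: eqP => [->|_]; rewrite ?sum_uses_S_N.
have arcs_sides : 2 * \sum_(0 <= i < n) \sum_(0 <= j < n)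
    (tile_weight (tile_ij i j) + plain_arcs (tile_ij i j))
    = used sN + used sE + used sS + used sW.
  rewrite big_distrr /=; under eq_bigr do rewrite big_distrr /=.
  by under eq_bigr do under eq_bigr do rewrite tile_arcs; rewrite !sum_nat2D.
apply/eqP; rewrite -(eqn_pmul2l (isT : 0 < 2)) arcs_sides.
by rewrite /charged_sides sum_nat2D charged_horizontal charged_vertical; apply/eqP; lia.
Qed.

Lemma sum_weight_le_budget : 0 < m ->
  \sum_(0 <= i < n) \sum_(0 <= j < n) tile_weight (tile_ij i j) <=
  \sum_(0 <= i < n) \sum_(0 <= j < n) side_budget (i == 0) (i == m) (j == 0) (j == m).
Proof.
move=> m_gt0.
have first_last k : ~~ ((k == 0) && (k == m)).
  by apply/negP => /andP[/eqP-> /eqP m0]; rewrite -m0 in m_gt0.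
have charged_le : \sum_(0 <= i < n) \sum_(0 <= j < n) charged_sides i j <=
    \sum_(0 <= i < n) \sum_(0 <= j < n)
      (plain_arcs (tile_ij i j) + side_budget (i == 0) (i == m) (j == 0) (j == m)).
  apply: leq_sum => i _; apply: leq_sum => j _; apply: charged_sides_le => //.
  - by apply/implyP => /eqP->; apply: unused_N_first.
  - by apply/implyP => /eqP->; apply: unused_S_last.
  - by apply/implyP => /eqP->; apply: unused_W_first.
  - by apply/implyP => /eqP->; apply: unused_E_last.
by move: charged_le; rewrite -sum_charged_sides !sum_nat2D; lia.
Qed.

End SuitablyConnected.

Lemma sum_tile_ij m (M : mosaic m.+1) (F : tile -> nat) :
  \sum_(0 <= i < m.+1) \sum_(0 <= j < m.+1) F (tile_ij M i j)
  = \sum_(i < m.+1) \sum_(j < m.+1) F (M i j).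
Proof.
rewrite big_mkord; apply: eq_bigr => i _; rewrite big_mkord.
by apply: eq_bigr => j _; rewrite /tile_ij !inord_val.
Qed.

Lemma sum_tile_weight n (M : mosaic n) :
  \sum_(i < n) \sum_(j < n) tile_weight (M i j) = 2 * crossings M + cusps M.
Proof.
rewrite /crossings /cusps big_distrr -big_split /=.
by apply: eq_bigr => i _; rewrite big_distrr -big_split.
Qed.

Lemma mosaic1_empty (M : mosaic 1) : suitably_connected M -> M ord0 ord0 = T0.
Proof.
move=> Msc; have ord0E : inord 0 = ord0 :> 'I_1 by apply: val_inj; rewrite /= inordK.
have := unused_N_first Msc 0; have := unused_E_last Msc 0.
have := unused_S_last Msc 0; have := unused_W_first Msc 0.
by rewrite /tile_ij ord0E; case: (M ord0 ord0).
Qed.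

Local Open Scope ring_scope.

Lemma opp_crossings_le_writhe n (M : mosaic n) (x0 : state n) :
  - (crossings M)%:Z <= writhe M x0.
Proof.
rewrite /writhe /crossings (big_morph Posz PoszD (erefl _)) -sumrN.
apply: ler_sum => i _; rewrite (big_morph Posz PoszD (erefl _)) -sumrN.
apply: ler_sum => j _; case: is_crossing => //=.
by rewrite /crossing_sign; case: ifP.
Qed.

Lemma opp_tb_le (R : realFieldType) n (M : mosaic n) (x0 : state n) :
  - tb R M x0 <= (crossings M)%:R + (cusps M)%:R / 2.
Proof.
have := opp_crossings_le_writhe M x0; rewrite -(ler_int R) mulrNz.
by rewrite /tb; lra.
Qed.

(* The constants come from [m^2 - m + 1 - 3/4 = (m - 1/2)^2]. *)
Lemma ceil_sqrt_le (R : realType) (t : R) (m : nat) : (0 < m)%N ->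
  t <= m%:R ^+ 2 - m%:R + 1 -> Num.ceil (Num.sqrt (t - 3 / 4) + 3 / 2) <= m.+1%:Z.
Proof.
move=> m_gt0 t_le; rewrite ceil_le_int -[m.+1%:~R]/(m.+1%:R : R) -[m.+1%:R]natr1.
have m_ge1 : 1 <= m%:R :> R by rewrite ler1n.
have half_ge0 : 0 <= m%:R - 1 / 2 :> R by lra.
suff sqrt_le : Num.sqrt (t - 3 / 4) <= m%:R - 1 / 2 by lra.
rewrite -(ger0_norm half_ge0) -sqrtr_sqr; apply: ler_wsqrtr.
by move: t_le; rewrite !expr2; lra.
Qed.

Theorem theorem2p4 (R : realType) (n : nat) (M : mosaic n) (x0 : state n) :
  suitably_connected M ->
  knot_mosaic M x0 ->
  (tb R M x0 < 0)%R ->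
  (Num.ceil (Num.sqrt (- tb R M x0 - 3 / 4) + 3 / 2) <= n%:Z)%R.
Proof.
case: n M x0 => [|[|k]] M x0 Msc _ tb_lt0.
- by move: tb_lt0; rewrite /tb /writhe /cusps !big_ord0 mul0r subr0 ltxx.
- move: tb_lt0; rewrite /tb /writhe /cusps !big_ord1 mosaic1_empty //=.
  by rewrite mul0r subr0 ltxx.
have weight_le := sum_weight_le_budget Msc (isT : (0 < k.+1)%N).
rewrite !sum_tile_ij sum_tile_weight in weight_le.
have count_le : (2 * crossings M + cusps M + 2 * k.+1 <= 2 * k.+1 ^ 2 + 2)%N.
  by rewrite -(sum_side_budget k) leq_add2r.
apply: ceil_sqrt_le => //; apply: le_trans (opp_tb_le R M x0) _.
by move: count_le; rewrite -(ler_nat R) !natrD !natrM; lra.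
Qed.
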